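(* Let $\mathcal E$ be a Hilbert space, $U\in\mathcal B(\mathcal E)$ a unitary and $P\in\mathcal B(\mathcal E)$ an orthogonal projection, and let $\pi(z)=U(P^\perp+zP)$ for $z\in\mathbb D$, where $P^\perp=I-P$. Then $1$ is an eigenvalue of $\pi(z)$ for some $z\in\mathbb D$ if and only if there is a non-zero $x\in\operatorname{ran}(P^\perp)$ with $Ux=x$.
   Context: $\mathbb D$ denotes the open unit disc. *)

From HB Require Import structures.
From mathcomp Require Import all_boot all_order all_algebra.
From mathcomp Require Import reals.
From mathcomp Require Import complex.
Set Implicit Arguments. Unset Strict Implicit. Unset Printing Implicit Defensive.
Import Order.TTheory GRing.Theory Num.Theory.
Local Open Scope ring_scope.

Section Hilbert.
Variables (R : realType) (E : lmodType R[i]) (ip : E -> E -> R[i]).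

Definition inner_product : Prop :=
  [/\ forall (a : R[i]) x y z, ip (a *: x + y) z = a * ip x z + ip y z,
      forall x y, ip x y = conjc (ip y x),
      forall x, 0 <= ip x x
    & forall x, ip x x = 0 -> x = 0].

Definition hnorm (x : E) : R := Num.sqrt (@complex.Re R (ip x x)).

Definition hcauchy (u : nat -> E) : Prop :=
  forall eps : R, 0 < eps -> exists N : nat,
    forall m n, (N <= m)%N -> (N <= n)%N -> hnorm (u m - u n) < eps.

Definition hconverges (u : nat -> E) (l : E) : Prop :=
  forall eps : R, 0 < eps -> exists N : nat,
    forall n, (N <= n)%N -> hnorm (u n - l) < eps.

Definition hcomplete : Prop :=
  forall u, hcauchy u -> exists l, hconverges u l.

Definition hilbert_space : Prop := inner_product /\ hcomplete.

Definition is_linear_op (T : E -> E) : Prop :=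
  forall (a : R[i]) x y, T (a *: x + y) = a *: T x + T y.

Definition bounded_op (T : E -> E) : Prop :=
  is_linear_op T /\ exists M : R, forall x, hnorm (T x) <= M * hnorm x.

Definition is_adjoint (T S : E -> E) : Prop :=
  forall x y, ip (T x) y = ip x (S y).

Definition unitary (U : E -> E) : Prop :=
  bounded_op U /\ exists Us : E -> E,
    is_adjoint U Us /\ (forall x, Us (U x) = x) /\ (forall x, U (Us x) = x).

Definition orth_projection (P : E -> E) : Prop :=
  bounded_op P /\ (forall x, P (P x) = P x) /\ is_adjoint P P.

Definition pencil (U P : E -> E) (z : R[i]) : E -> E :=
  fun x => U ((x - P x) + z *: P x).

Definition op_eigenvalue (T : E -> E) (lambda : R[i]) : Prop :=
  exists x, x != 0 /\ T x = lambda *: x.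

End Hilbert.

From HB Require Import structures.
From mathcomp Require Import all_boot all_order all_algebra.
From mathcomp Require Import reals.
From mathcomp Require Import complex.
Import Order.TTheory GRing.Theory Num.Theory.
Local Open Scope ring_scope.
Set Implicit Arguments.
Unset Strict Implicit.

(* Write x = a + b with a = P^perp x and b = P x; these two
   components are orthogonal, so <x,x> = <a,a> + <b,b>.  If pi(z) x = x, then,
   U being an isometry,
     <a,a> + <b,b> = <x,x> = <a + z b, a + z b> = <a,a> + |z|^2 <b,b>,
   so (1 - |z|^2) <b,b> = 0; with |z| < 1 this forces b = 0.  Hence x lies in
   ran(P^perp), where pi(z) acts as U, and U x = x. *)

Section InnerProduct.
Variables (R : realType) (E : lmodType R[i]) (ip : E -> E -> R[i]).
Hypothesis ipP : inner_product ip.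

Lemma ip0l v : ip 0 v = 0.
Proof.
case: ipP => ipl _ _ _; have := ipl 1 0 0 v.
by rewrite scaler0 addr0 mul1r => /eqP; rewrite -subr_eq subrr eq_sym => /eqP.
Qed.

Lemma iplD u v w : ip (u + v) w = ip u w + ip v w.
Proof. by case: ipP => ipl _ _ _; have := ipl 1 u v w; rewrite scale1r mul1r. Qed.

Lemma iplZ c u w : ip (c *: u) w = c * ip u w.
Proof. by case: ipP => ipl _ _ _; have := ipl c u 0 w; rewrite addr0 ip0l addr0. Qed.

Lemma iprD u v w : ip u (v + w) = ip u v + ip u w.
Proof. by case: ipP => _ ips _ _; rewrite ips iplD rmorphD /= -!ips. Qed.

Lemma iprZ c u w : ip u (c *: w) = c^* * ip u w.
Proof. by case: ipP => _ ips _ _; rewrite ips iplZ rmorphM /= -ips. Qed.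

Lemma ip_pythagoras a b c : ip a b = 0 ->
  ip (a + c *: b) (a + c *: b) = ip a a + `|c| ^+ 2 * ip b b.
Proof.
case: ipP => _ ips _ _ ab; have ba : ip b a = 0 by rewrite ips ab conjc0.
rewrite iplD !iprD !iplZ !iprZ ab ba !mulr0 addr0 add0r.
by rewrite normCK mulrA [c * _]mulrC.
Qed.

End InnerProduct.

Section Operators.
Variables (R : realType) (E : lmodType R[i]) (ip : E -> E -> R[i]).

Lemma linB (T : E -> E) x y : is_linear_op T -> T (x - y) = T x - T y.
Proof. by move=> Tlin; rewrite -scaleN1r addrC Tlin scaleN1r addrC. Qed.

Lemma proj_compl_ker (P : E -> E) x :
  orth_projection ip P -> P (x - P x) = 0.
Proof. by case=> [[Plin _] [PP _]]; rewrite linB // PP subrr. Qed.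

Lemma proj_compl_orth (P : E -> E) x y : inner_product ip ->
  orth_projection ip P -> ip (x - P x) (P y) = 0.
Proof.
move=> ipP HP; case: (HP) => _ [_ Padj].
by rewrite -Padj proj_compl_ker // ip0l.
Qed.

Lemma unitary_isometry (U : E -> E) x :
  unitary ip U -> ip (U x) (U x) = ip x x.
Proof. by case=> _ [Us [Uadj [UsU _]]]; rewrite Uadj UsU. Qed.

Lemma pencil_kerP (U P : E -> E) z x : P x = 0 -> pencil U P z x = U x.
Proof. by move=> Px0; rewrite /pencil Px0 scaler0 subr0 addr0. Qed.

Lemma pencil_fixed_kerP (U P : E -> E) z x : inner_product ip ->
  unitary ip U -> orth_projection ip P ->
  `|z| < 1 -> pencil U P z x = x -> P x = 0.
Proof.
move=> ipP HU HP zlt1 fixx; case: (ipP) => _ _ _ ipdef.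
set a := x - P x; set b := P x.
have ab : ip a b = 0 by exact: proj_compl_orth.
have xab : x = a + b by rewrite /a subrK.
have norm_x : ip x x = ip a a + ip b b.
  by rewrite xab -[b in a + b]scale1r ip_pythagoras // normr1 expr1n mul1r.
have norm_pencil : ip x x = ip a a + `|z| ^+ 2 * ip b b.
  by rewrite -[in LHS]fixx /pencil unitary_isometry // ip_pythagoras.
have : (1 - `|z| ^+ 2) * ip b b = 0.
  by move: norm_pencil; rewrite norm_x => /addrI bb; rewrite mulrBl mul1r -bb subrr.
have z2lt1 : `|z| ^+ 2 < 1 by rewrite expr_lt1.
move/eqP; rewrite mulf_eq0 subr_eq0 => /orP [/eqP z2eq1|/eqP bb0]; last exact: ipdef.
by move: z2lt1; rewrite -z2eq1 ltxx.
Qed.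

End Operators.

Unset Implicit Arguments.

Theorem lemma2p3 (R : realType) (E : lmodType R[i]) (ip : E -> E -> R[i])
    (U P : E -> E) :
  hilbert_space ip -> unitary ip U -> orth_projection ip P ->
  (exists z : R[i], `|z| < 1 /\ op_eigenvalue (pencil U P z) 1) <->
  (exists x : E, x != 0 /\ (exists y : E, x = y - P y) /\ U x = x).
Proof.
move=> [ipP _] HU HP; split.
- move=> [z [zlt1 [x [xn0 fixx]]]]; rewrite scale1r in fixx.
  have Px0 : P x = 0 by exact: (pencil_fixed_kerP ipP HU HP zlt1 fixx).
  exists x; split=> //; split; first by exists x; rewrite Px0 subr0.
  by rewrite -(pencil_kerP U z Px0).
- move=> [x [xn0 [[y xe] Ux]]].
  have Px0 : P x = 0 by rewrite xe; exact: proj_compl_ker HP.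
  exists 0; split; first by rewrite normr0 ltr01.
  by exists x; split=> //; rewrite scale1r (pencil_kerP U 0 Px0).
Qed.
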